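(* Let $f:X\to\mathcal G$ be a function and $x_0\in\operatorname{dom} f$. The following are equivalent: (a) $f(x_0)\in\operatorname{Min}f[X]$, i.e. for all $x\in X$, $f(x)\supseteq f(x_0)$ implies $f(x)=f(x_0)$; (b) for all $x\in X$ with $f(x)\ne f(x_0)$ there is $z^*\in C^-\setminus\{0\}$ with $\varphi_{f,z^*}(x_0)<\varphi_{f,z^*}(x)$; (c) for all $x\in X$ with $f(x)\ne f(x_0)$ there is $z^*\in C^-\setminus\{0\}$ with $\varphi_{f,z^*}(x)\neq-\infty$ and $\varphi_{f,z^*}(x_0)\ominus\varphi_{f,z^*}(x)<0$; (d) for all $x\in X$ with $f(x)\ne f(x_0)$ there is $z^*\in C^-\setminus\{0\}$ with $0<\varphi_{f,z^*}(x)\ominus\varphi_{f,z^*}(x_0)$; (e) for all $x\in X$ with $f(x)\neq f(x_0)$: $0\notin f(x)\ominus f(x_0)$.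
   Context: $X$ real linear space, $Z$ real locally convex Hausdorff space with dual $Z^*$, $C\subseteq Z$ closed convex cone, $0\in C$, $C^-=\{z^*:z^*(c)\le0\ \forall c\in C\}$, $C^-\setminus\{0\}\ne\emptyset$. $\mathcal G=\{A\subseteq Z:A=\operatorname{cl}\operatorname{co}(A+C)\}$; $A\ominus B=\{z\in Z:B+\{z\}\subseteq A\}$; $\operatorname{dom}f=\{x:f(x)\ne\emptyset\}$. On $\overline{\mathbb R}$: inf-addition $\dot+$ ($(-\infty)\dot+(+\infty)=+\infty$), $r\ominus s=\inf\{t\in\mathbb R:r\le s\dot+t\}$ ($\inf\emptyset=+\infty$). $\varphi_{f,z^*}(x)=\inf\{-z^*(z):z\in f(x)\}$ ($+\infty$ if $f(x)=\emptyset$). *)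

From HB Require Import structures.
From mathcomp Require Import all_boot all_order all_algebra.
From mathcomp Require Import all_classical all_reals all_analysis.
Set Implicit Arguments. Unset Strict Implicit. Unset Printing Implicit Defensive.
Import Order.TTheory GRing.Theory Num.Theory.
Import numFieldTopology.Exports numFieldNormedType.Exports.
Local Open Scope classical_set_scope.
Local Open Scope ring_scope.

Definition is_dual (R : realType) (Z : tvsType R) (zs : Z -> R) : Prop :=
  (forall (a : R) (x y : Z), zs (a *: x + y) = a * zs x + zs y) /\
  continuous zs.

Definition closed_convex_cone (R : realType) (Z : tvsType R) (C : set Z) : Prop :=
  [/\ closed C, convex_set (C : set (convex_lmodType Z)),
      (forall (t : R) c, 0 <= t -> C c -> C (t *: c)) & C 0].

Definition neg_dual_cone (R : realType) (Z : tvsType R) (C : set Z)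
  (zs : Z -> R) : Prop :=
  is_dual zs /\ (forall c, C c -> zs c <= 0).

Definition conv_hull (R : realType) (Z : tvsType R) (A : set Z) : set Z :=
  \bigcap_(B in [set B : set Z | convex_set (B : set (convex_lmodType Z)) /\ A `<=` B]) B.

Definition set_add (R : realType) (Z : tvsType R) (A B : set Z) : set Z :=
  [set a + b | a in A & b in B].

Definition inG (R : realType) (Z : tvsType R) (C : set Z) (A : set Z) : Prop :=
  A = closure (conv_hull (set_add A C)).

Definition set_minus (R : realType) (Z : tvsType R) (A B : set Z) : set Z :=
  [set z | set_add B [set z] `<=` A].

(* phi_{f,z*}(x) = inf {-z*(z) | z in f x}, +oo if f x is empty *)
Definition phi (R : realType) (X : Type) (Z : tvsType R) (f : X -> set Z)
  (zs : Z -> R) (x : X) : \bar R :=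
  ereal_inf [set ((- zs z)%:E)%E | z in f x].

(* r ⊖ s = inf {t in R | r <= s +. t} on the extended reals; since t is real,
   inf-addition s +. t coincides with the ordinary one. *)
Definition eminus (R : realType) (r s : \bar R) : \bar R :=
  ereal_inf [set (t%:E)%E | t in [set t : R | (r <= s + t%:E)%E]].

From HB Require Import structures.
From mathcomp Require Import all_boot all_order all_algebra.
From mathcomp Require Import all_classical all_reals all_analysis.
From mathcomp.algebra_tactics Require Import ring lra.
Import Order.TTheory GRing.Theory Num.Theory.
Import numFieldTopology.Exports numFieldNormedType.Exports.
Local Open Scope classical_set_scope.
Local Open Scope ring_scope.

(* Only (a) -> (b) has content; the other implications are bookkeeping on the
   extended reals, using that [phi f zs] is antitone in [f x].  If [f x0] is
   not contained in [f x], pick [z0] in [f x0] outside [f x].  As [f x] is the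
   closure of the convex set [co (f x + C)], a separation theorem in the locally
   convex space [Z] yields a continuous linear functional strictly separating
   [z0] from it; being bounded below on [f x + C], its negative lies in [C^-].
   Separation comes from Hahn-Banach applied to the Minkowski gauge of a convex
   neighbourhood of 0, the dominated extension being obtained by Zorn's lemma. *)

Definition linear_functional {R : realType} {Z : lmodType R} (g : Z -> R) :=
  forall a x y, g (a *: x + y) = a * g x + g y.

Section LinearFunctional.
Context {R : realType} {Z : lmodType R} {g : Z -> R}.
Hypothesis g_lin : linear_functional g.

Lemma lfun0 : g 0 = 0.
Proof.
have := g_lin 1 0 0; rewrite scale1r mul1r addr0 => g00.
by apply: (@addrI _ (g 0)); rewrite addr0 -g00.
Qed.

Lemma lfunD x y : g (x + y) = g x + g y.
Proof. by rewrite -[x in LHS]scale1r g_lin mul1r. Qed.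

Lemma lfunZ a x : g (a *: x) = a * g x.
Proof. by rewrite -[_ *: x]addr0 g_lin lfun0 addr0. Qed.

Lemma lfunN x : g (- x) = - g x.
Proof. by rewrite -scaleN1r lfunZ mulN1r. Qed.

Lemma lfunB x y : g (x - y) = g x - g y.
Proof. by rewrite lfunD lfunN. Qed.

End LinearFunctional.

Section MinkowskiGauge.
Variables (R : realType) (Z : lmodType R) (E : set Z).
Hypothesis convE : forall x y (t : R), 0 <= t -> t <= 1 -> E x -> E y ->
  E (t *: x + (1 - t) *: y).
Hypothesis absorbingE : forall z, exists2 l : R, 0 < l & E (l^-1 *: z).

Definition gauge_set z := [set l : R | 0 < l /\ E (l^-1 *: z)].
Definition gauge z := inf (gauge_set z).

Lemma gauge_set_n0 z : gauge_set z !=set0.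
Proof. by have [l l0 El] := absorbingE z; exists l. Qed.

Lemma gauge_set_lbound z : has_lbound (gauge_set z).
Proof. by exists 0 => l [l0 _]; exact: ltW. Qed.

Lemma gauge_le z l : 0 < l -> E (l^-1 *: z) -> gauge z <= l.
Proof. by move=> l0 El; apply: (ge_inf (gauge_set_lbound z)). Qed.

Lemma gauge_le1 z : E z -> gauge z <= 1.
Proof. by move=> Ez; apply: gauge_le => //; rewrite invr1 scale1r. Qed.

Lemma gauge_scale t w : 0 < t -> t * gauge w <= gauge (t *: w).
Proof.
move=> t0; apply: lb_le_inf; first exact: gauge_set_n0.
move=> l [l0 El]; rewrite -ler_pdivlMl // mulrC.
apply: gauge_le; first by rewrite divr_gt0.
by rewrite scalerA in El; rewrite invf_div mulrC.
Qed.

Lemma gauge_add z w : gauge (z + w) <= gauge z + gauge w.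
Proof.
have gauge_add_le l m : gauge_set z l -> gauge_set w m -> gauge (z + w) <= l + m.
  move=> [l0 El] [m0 Em]; have lm0 : 0 < l + m by rewrite addr_gt0.
  apply: gauge_le => //.
  have -> : (l + m)^-1 *: (z + w) =
      (l / (l + m)) *: (l^-1 *: z) + (1 - l / (l + m)) *: (m^-1 *: w).
    by rewrite !scalerA scalerDr; congr (_ *: _ + _ *: _); field;
      rewrite ?lt0r_neq0.
  apply: convE => //; first by rewrite divr_ge0 // ltW.
  by rewrite ler_pdivrMr // mul1r lerDl ltW.
rewrite -lerBlDl; apply: lb_le_inf; first exact: gauge_set_n0.
move=> m wm; rewrite lerBlDl -lerBlDr.
apply: lb_le_inf; first exact: gauge_set_n0.
by move=> l zl; rewrite lerBlDr; exact: gauge_add_le.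
Qed.

Lemma gauge_scale_notin e : E 0 -> ~ E e -> forall t, t <= gauge (t *: e).
Proof.
move=> E0 Ne t; have [t0|t0] := leP t 0.
  by apply: le_trans t0 _; apply: lb_le_inf; [exact: gauge_set_n0|move=> l [/ltW]].
apply: lb_le_inf; first exact: gauge_set_n0.
move=> l [l0 El]; rewrite leNgt; apply/negP => lt; apply: Ne.
have -> : e = (l / t) *: (l^-1 *: (t *: e)) + (1 - l / t) *: 0.
  rewrite scaler0 addr0 !scalerA.
  have -> : l / t * l^-1 * t = 1 by field; rewrite ?lt0r_neq0.
  by rewrite scale1r.
apply: convE => //; first by rewrite divr_ge0 // ltW.
by rewrite ler_pdivrMr // mul1r ltW.
Qed.

End MinkowskiGauge.
Arguments gauge {R Z}.

Section HahnBanach.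
Variables (R : realType) (Z : lmodType R) (p : Z -> R) (e : Z).
Hypothesis p_add : forall z w, p (z + w) <= p z + p w.
Hypothesis p_scale : forall t w, 0 < t -> t * p w <= p (t *: w).
Hypothesis p_line : forall t, t <= p (t *: e).
Hypothesis e_neq0 : e != 0.

(* Partial linear functionals extending [t e |-> t] and dominated by [p],
   represented by their graphs so that Zorn's lemma applies to unions. *)
Definition hb_graph (G : set (Z * R)) :=
  [/\ forall t, G (t *: e, t),
      forall z r r', G (z, r) -> G (z, r') -> r = r',
      forall a z r w s, G (z, r) -> G (w, s) -> G (a *: z + w, a * r + s)
    & forall z r, G (z, r) -> r <= p z].

Definition line_graph : set (Z * R) := [set (t *: e, t) | t in [set: R]].

Lemma hb_line_graph : hb_graph line_graph.
Proof.
split.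
- by move=> t; exists t.
- move=> _ _ _ [t _ [<- <-]] [t' _ [ett' <-]].
  apply/eqP; rewrite -subr_eq0; apply: contraNT e_neq0 => tt.
  by rewrite -[e]scale1r -(mulVf tt) -scalerA scalerBl ett' subrr scaler0.
- move=> a _ _ _ _ [t _ [<- <-]] [t' _ [<- <-]]; exists (a * t + t') => //.
  by rewrite scalerDl scalerA.
- by move=> _ _ [t _ [<- <-]].
Qed.

Lemma hb_graph00 {G : set (Z * R)} : hb_graph G -> G (0, 0).
Proof. by rewrite -{1}(scale0r e); case. Qed.

Section Extension.
Variables (A : set (Z * R)) (y : Z).
Hypothesis hbA : hb_graph A.
Hypothesis Ny : forall r, ~ A (y, r).

Lemma hb_graphZ a z r : A (z, r) -> A (a *: z, a * r).
Proof.
case: hbA => _ _ Al _ Azr.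
by have := Al a z r 0 0 Azr (hb_graph00 hbA); rewrite !addr0.
Qed.

Lemma hb_graph_gap : exists c,
  (forall u h, A (u, h) -> h - p (u - y) <= c) /\
  (forall v k, A (v, k) -> c <= p (v + y) - k).
Proof.
case: hbA => _ _ Al Ad.
have gap u h v k : A (u, h) -> A (v, k) -> h - p (u - y) <= p (v + y) - k.
  move=> Auh Avk; have := Ad _ _ (Al 1 _ _ _ _ Auh Avk).
  rewrite !scale1r !mul1r => hk; have := p_add (u - y) (v + y).
  by rewrite addrCA subrK addrC => puv; lra.
pose L := [set x : R | exists u h, A (u, h) /\ x = h - p (u - y)].
have A00 := hb_graph00 hbA.
have Lub : ubound L (p (0 + y) - 0) by move=> _ [u [h [Auh ->]]]; exact: gap.
exists (sup L); split.
  by move=> u h Auh; apply: ub_le_sup; [exists (p (0 + y) - 0)|exists u, h].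
move=> v k Avk; apply: ge_sup; first by exists (0 - p (0 - y)), 0, 0.
by move=> _ [u [h [Auh ->]]]; exact: gap.
Qed.

Variable c : R.
Hypothesis c_lb : forall u h, A (u, h) -> h - p (u - y) <= c.
Hypothesis c_ub : forall v k, A (v, k) -> c <= p (v + y) - k.

Definition graph_adjoin : set (Z * R) :=
  [set zr | exists s r t, A (s, r) /\ zr = (s + t *: y, r + t * c)].

Lemma sub_graph_adjoin : A `<=` graph_adjoin.
Proof. by move=> [z r] Azr; exists z, r, 0; rewrite scale0r mul0r !addr0. Qed.

Lemma graph_adjoin_dominated s r t : A (s, r) -> r + t * c <= p (s + t *: y).
Proof.
move=> Asr; have [t0|t0|->] := ltgtP t 0; last first.
- by rewrite scale0r mul0r !addr0; case: hbA => _ _ _; apply.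
- have := c_ub _ _ (hb_graphZ t^-1 _ _ Asr).
  have := @p_scale t (t^-1 *: s + y) t0.
  rewrite scalerDr scalerA divff ?gt_eqF // scale1r => hp hc.
  have : t * c <= t * (p (t^-1 *: s + y) - t^-1 * r) by rewrite ler_pM2l.
  by rewrite mulrBr mulrA divff ?gt_eqF // mul1r; lra.
- have u0 : 0 < - t by rewrite oppr_gt0.
  have := c_lb _ _ (hb_graphZ (- t)^-1 _ _ Asr).
  have := @p_scale (- t) ((- t)^-1 *: s - y) u0.
  rewrite scalerBr scalerA divff ?gt_eqF // scale1r scaleNr opprK => hp hc.
  have : - t * ((- t)^-1 * r - p ((- t)^-1 *: s - y)) <= - t * c.
    by rewrite ler_pM2l.
  by rewrite mulrBr mulrA divff ?gt_eqF // mul1r; nra.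
Qed.

Lemma hb_graph_adjoin : hb_graph graph_adjoin.
Proof.
case: hbA => Ae Af Al Ad; split.
- by move=> t; apply: sub_graph_adjoin.
- move=> z r r' [s [g [t [Asg [-> ->]]]]] [s' [g' [t' [Asg' [eqs ->]]]]].
  have [tt|ntt] := eqVneq t t'.
    move: eqs; rewrite -tt => /addIr ss; rewrite -ss in Asg'.
    by rewrite (Af _ _ _ Asg Asg').
  exfalso; apply: (Ny ((t - t')^-1 * (g' - g))).
  have := hb_graphZ (t - t')^-1 _ _ (Al (-1) _ _ _ _ Asg Asg').
  have -> : -1 *: s + s' = (t - t') *: y.
    rewrite scaleN1r scalerBl; apply: (addrI s).
    by rewrite addNKr addrA eqs addrK.
  by rewrite scalerA mulVf ?subr_eq0 // scale1r mulN1r [- g + _]addrC.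
- move=> a z r w u [s [g [t [Asg [-> ->]]]]] [s' [g' [t' [Asg' [-> ->]]]]].
  exists (a *: s + s'), (a * g + g'), (a * t + t'); split; first exact: Al.
  congr (_, _).
    by rewrite scalerDr scalerA scalerDl addrACA.
  by rewrite mulrDr mulrA mulrDl addrACA.
- by move=> z r [s [g [t [Asg [-> ->]]]]]; exact: graph_adjoin_dominated.
Qed.

End Extension.

Lemma hb_graph_extend A y : hb_graph A -> (forall r, ~ A (y, r)) ->
  exists2 B, hb_graph B & A `<` B.
Proof.
move=> hbA Ny; have [c [c_lb c_ub]] := hb_graph_gap A y hbA.
exists (graph_adjoin A y c); first exact: hb_graph_adjoin.
split; first exact: sub_graph_adjoin.
move=> BA; apply: (Ny c); apply: BA.
exists 0, 0, 1; rewrite scale1r mul1r !add0r; split => //; exact: hb_graph00.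
Qed.

Lemma hb_graph_chain (F : set (set (Z * R))) :
  F `<=` [set G | G = set0 \/ hb_graph G] -> total_on F subset ->
  \bigcup_(G in F) G = set0 \/ hb_graph (\bigcup_(G in F) G).
Proof.
move=> FP Ftot.
have hbF G zr : F G -> G zr -> hb_graph G.
  by move=> FG Gzr; case: (FP G FG) => // G0; rewrite G0 in Gzr.
have common zr zr' : (\bigcup_(G in F) G) zr -> (\bigcup_(G in F) G) zr' ->
    exists2 G, F G & G zr /\ G zr'.
  move=> [G1 F1 G1z] [G2 F2 G2z]; case: (Ftot _ _ F1 F2) => [s12|s21].
    by exists G2 => //; split => //; apply: s12.
  by exists G1 => //; split => //; apply: s21.
have [->|/set0P [zr0 [G0 F0 G0z]]] := eqVneq (\bigcup_(G in F) G) set0; first by left.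
right; split.
- by move=> t; exists G0 => //; case: (hbF _ _ F0 G0z).
- move=> z r r' U1 U2; have [G FG [G1 G2]] := common _ _ U1 U2.
  by case: (hbF _ _ FG G1) => _ Gf _ _; exact: Gf G1 G2.
- move=> a z r w s U1 U2; have [G FG [G1 G2]] := common _ _ U1 U2.
  by exists G => //; case: (hbF _ _ FG G1) => _ _ Gl _; exact: Gl.
- by move=> z r [G FG G1]; case: (hbF _ _ FG G1) => _ _ _ Gd; exact: Gd.
Qed.

Theorem hahn_banach_line : exists2 g : Z -> R, linear_functional g &
  g e = 1 /\ forall z, g z <= p z.
Proof.
have [A [PA Amax]] := Zorn_bigcup hb_graph_chain.
have hbA : hb_graph A.
  case: PA => // A0; exfalso; apply: (Amax line_graph).
    by rewrite A0; split => // /(_ (0 *: e, 0)) /(_ (ex_intro2 _ _ 0 I erefl)).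
  by right; exact: hb_line_graph.
have total z : exists r, A (z, r).
  apply: contrapT => Nz; have Nzr r : ~ A (z, r) by move=> Azr; apply: Nz; exists r.
  by have [B hbB /Amax] := hb_graph_extend A z hbA Nzr; apply; right.
case: hbA => Ae Af Al Ad.
pose g z := xget 0 [set r | A (z, r)].
have Ag z : A (z, g z) := xgetPex 0 (total z).
exists g; first by move=> a x w; apply: (Af (a *: x + w)) => //; exact: Al.
by split; [apply: (Af e) => //; have := Ae 1; rewrite scale1r|move=> z; exact: Ad].
Qed.

End HahnBanach.

Section Separation.
Context {R : realType} {Z : tvsType R}.

Lemma convex_setP (A : set Z) : convex_set (A : set (convex_lmodType Z)) <->
  forall x y (t : R), 0 <= t -> t <= 1 -> A x -> A y -> A (t *: x + (1 - t) *: y).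
Proof.
split => [cA x y t t0 t1 Ax Ay|cA x y l /set_mem Ax /set_mem Ay].
  by have := cA x y (Itv01 t0 t1) (mem_set Ax) (mem_set Ay); rewrite inE.
by apply/mem_set/cA; [exact: ge0|exact: le1|..].
Qed.

Lemma nbhs0_absorbing {U : set Z} :
  nbhs 0 U -> forall z, exists2 s : R, 0 < s & U (s *: z).
Proof.
move=> U0 z; have /= := @scale_continuous R Z (0, z) U.
rewrite scale0r => /(_ U0)[] /= B [B1 B2] BU.
have [eps eps0 beps] := (nbhs_ballP _ _).1 B1.
exists (eps / 2); first by rewrite divr_gt0.
apply: (BU (eps / 2, z)); split => /=; last exact: nbhs_singleton.
apply: beps; rewrite /ball /= sub0r normrN gtr0_norm ?divr_gt0 //.
by rewrite ltr_pdivrMr // ltr_pMr // ltr1n.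
Qed.

Lemma lfun_bounded_continuous (g : Z -> R) (E : set Z) : linear_functional g ->
  nbhs 0 E -> (forall z, E z -> g z <= 1) -> continuous g.
Proof.
move=> g_lin En gE x; apply/cvgrPdist_le => eps eps0.
pose W := E `&` [set w | E (- w)].
have Wn : nbhs 0 W.
  apply: filterI => //; apply: filterS (nbhs0N En).
  by move=> _ [u Eu <-] /=; rewrite opprK.
apply: filterS (nbhsT x (nbhs0Z (lt0r_neq0 eps0) Wn)).
move=> _ [_ [w [Ew ENw] <-] <-] /=.
rewrite (lfunD g_lin) (lfunZ g_lin) opprD addrA subrr add0r normrN normrM.
rewrite gtr0_norm //.
rewrite -[X in _ <= X]mulr1 ler_pM2l // ler_norml gE // andbT.
by rewrite lerNl -(lfunN g_lin); exact: gE.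
Qed.

Lemma separate_convex_nbhs0 (E : set Z) (e : Z) :
  convex_set (E : set (convex_lmodType Z)) -> nbhs 0 E -> ~ E e ->
  exists2 g : Z -> R, is_dual g & g e = 1 /\ forall z, E z -> g z <= 1.
Proof.
move=> /convex_setP convE En Ne.
have E0 : E 0 := nbhs_singleton En.
have absorbingE z : exists2 l : R, 0 < l & E (l^-1 *: z).
  by have [s s0 Es] := nbhs0_absorbing En z; exists s^-1; rewrite ?invr_gt0 ?invrK.
have e_neq0 : e != 0 by apply: contraPneq Ne => ->.
have [g g_lin [ge1 g_gauge]] :
    exists2 g, linear_functional g & g e = 1 /\ forall z, g z <= gauge E z.
  apply: hahn_banach_line e_neq0 => [z w|t w|t].
  - exact: gauge_add.
  - exact: gauge_scale.
  - exact: gauge_scale_notin.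
have gE z : E z -> g z <= 1.
  by move=> Ez; apply: le_trans (g_gauge z) _; exact: gauge_le1.
by exists g => //; split => //; exact: lfun_bounded_continuous gE.
Qed.

End Separation.

Section PointSeparation.
Context {R : realType} {Z : tvsType R}.

Lemma locally_convex_nbhs {z : Z} {N : set Z} : nbhs z N ->
  exists V : set Z, [/\ convex_set (V : set (convex_lmodType Z)), nbhs z V & V `<=` N].
Proof.
move=> Nz; have [B convB [openB basisB]] := @locally_convex R Z.
have [V [BV Vz] VN] := basisB z N Nz.
exists V; split => //; first by apply: convB; rewrite inE.
by apply: open_nbhs_nbhs; split => //; exact: openB.
Qed.

Theorem separate_point_convex (K : set Z) (z0 : Z) :
  convex_set (K : set (convex_lmodType Z)) -> K !=set0 -> ~ closure K z0 ->
  exists2 g : Z -> R, is_dual g &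
    exists2 t, 0 < t & forall k, K k -> g z0 + t <= g k.
Proof.
move=> /convex_setP convK [k0 Kk0] NKz0.
have [N Nz0 NK] : exists2 N, nbhs z0 N & forall k, K k -> ~ N k.
  apply: contrapT => NN; apply: NKz0 => N Nz0; apply: contrapT => NKN; apply: NN.
  by exists N => // k Kk Nk; apply: NKN; exists k.
have [V [/convex_setP convV Vz0 VN]] := locally_convex_nbhs Nz0.
(* [E = V - K + e] is a convex neighbourhood of 0 missing [e], as [V] and [K]
   are disjoint. *)
pose e := k0 - z0.
pose E := [set v - k + e | v in V & k in K].
pose U := [set w | V (z0 + w)].
have U0 : nbhs 0 U.
  have := @nbhsB R Z V z0 (- z0) Vz0; rewrite addNr; apply: filterS.
  by move=> _ [v Vv <-]; rewrite /U /= addNKr.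
have UE : U `<=` E.
  move=> w Vw; exists (z0 + w) => //; exists k0 => //.
  by rewrite /e addrA subrK [z0 + w]addrC addrK.
have convE : convex_set (E : set (convex_lmodType Z)).
  apply/convex_setP => _ _ t t0 t1 [v Vv [k Kk <-]] [v' Vv' [k' Kk' <-]].
  exists (t *: v + (1 - t) *: v'); first exact: convV.
  exists (t *: k + (1 - t) *: k'); first exact: convK.
  rewrite (scalerDr t (v - k)) (scalerDr (1 - t) (v' - k')) [RHS]addrACA.
  rewrite -[t *: e + _]scalerDl subrKC scale1r; congr (_ + _).
  by rewrite !scalerBr opprD addrACA.
have NEe : ~ E e.
  move=> [v Vv [k Kk /(canRL (addrK e))]]; rewrite subrr => /subr0_eq vk.
  by apply: (NK k Kk); apply: VN; rewrite -vk.
have [g [g_lin g_cont] [ge1 gE]] :=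
  separate_convex_nbhs0 E e convE (filterS UE U0) NEe.
exists g; first by split.
have [s s0 Us] := nbhs0_absorbing U0 e.
exists s => // k Kk.
have /gE : E (z0 + s *: e - k + e) by exists (z0 + s *: e) => //; exists k.
rewrite (lfunD g_lin) (lfunB g_lin) (lfunD g_lin) (lfunZ g_lin) ge1; lra.
Qed.

End PointSeparation.

Lemma lfun_ge0_on_cone {R : realType} {Z : lmodType R} {g : Z -> R} {C : set Z}
    {a : Z} {m : R} :
  linear_functional g -> (forall t c, 0 <= t -> C c -> C (t *: c)) ->
  (forall c, C c -> m <= g (a + c)) -> forall c, C c -> 0 <= g c.
Proof.
move=> g_lin coneC gm c Cc; rewrite leNgt; apply/negP => gc0.
have ma : m <= g a by have := gm _ (coneC 0 c (lexx 0) Cc); rewrite scale0r addr0.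
(* moving far enough along the ray [a + l c] pushes [g] below [m] *)
pose l := (g a - m + 1) / - g c.
have l0 : 0 <= l by rewrite divr_ge0 // ?oppr_ge0 ?ltW //; lra.
have := gm _ (coneC l c l0 Cc); rewrite (lfunD g_lin) (lfunZ g_lin).
have -> : l * g c = m - 1 - g a by rewrite /l; field; rewrite ltr0_neq0.
lra.
Qed.

Lemma conv_hull_sub {R : realType} {Z : tvsType R} (A : set Z) : A `<=` conv_hull A.
Proof. by move=> x Ax B [_ AB]; exact: AB. Qed.

Lemma conv_hull_convex {R : realType} {Z : tvsType R} (A : set Z) :
  convex_set (conv_hull A : set (convex_lmodType Z)).
Proof.
move=> x y l /set_mem hx /set_mem hy; apply/mem_set => B [cB AB].
have := cB x y l (mem_set (hx B (conj cB AB))) (mem_set (hy B (conj cB AB))).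
by rewrite inE.
Qed.

Theorem inG_separation {R : realType} {Z : tvsType R} {C A : set Z} {z0 : Z} :
  closed_convex_cone C -> inG C A -> A !=set0 -> ~ A z0 ->
  exists2 zs : Z -> R, neg_dual_cone C zs /\ zs <> (fun _ => 0) &
    exists2 t, 0 < t & forall z, A z -> - zs z0 + t <= - zs z.
Proof.
move=> [_ _ coneC C0] hA [a0 Aa0] NAz0.
pose K := conv_hull (set_add A C).
have AK : A `<=` K.
  by move=> z Az; apply: conv_hull_sub; exists z => //; exists 0 => //; rewrite addr0.
have NKz0 : ~ closure K z0 by rewrite /K -hA.
have [g [g_lin g_cont] [t t0 gK]] :=
  separate_point_convex K z0 (conv_hull_convex _) (ex_intro _ a0 (AK _ Aa0)) NKz0.
have gC : forall c, C c -> 0 <= g c.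
  apply: (lfun_ge0_on_cone (a := a0) (m := g z0 + t) g_lin coneC) => c Cc.
  by apply: gK; apply: conv_hull_sub; exists a0 => //; exists c.
exists (fun z => - g z); last first.
  by exists t => // z Az; rewrite !opprK; apply: gK; exact: AK.
split; first split; first split.
- by move=> a x y; rewrite g_lin opprD mulrN.
- by move=> x; apply: cvgN; exact: g_cont.
- by move=> c Cc; rewrite oppr_le0; exact: gC.
- move=> /(congr1 (fun h => h z0 - h a0)) /=; rewrite subrr opprK.
  by have := gK _ (AK _ Aa0); lra.
Qed.

Section EMinus.
Variable R : realType.
Local Open Scope ereal_scope.

Lemma eminus_gt0 (r s : \bar R) : (0 < eminus s r) = (r < s).
Proof.
apply/idP/idP => [|rs].
  apply: contraLR; rewrite -!leNgt => sr.
  by apply: ereal_inf_lbound; exists 0%R => //=; rewrite adde0.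
have gap (m : R) : (0 < m)%R -> (forall t : R, s <= r + t%:E -> (m <= t)%R) ->
    0 < eminus s r.
  move=> m0 hm; apply: (@lt_le_trans _ _ m%:E); first by rewrite lte_fin.
  by apply: le_ereal_inf_tmp => _ [t ht <-]; rewrite lee_fin; apply: hm.
case: r rs gap => [r||] //; case: s => [s||] // rs gap.
- apply: (gap (s - r)%R); first by rewrite lte_fin in rs; lra.
  by move=> t; rewrite -EFinD lee_fin; lra.
- by apply: (gap 1%R) => // t; rewrite -EFinD leye_eq.
- by apply: (gap 1%R) => // t; rewrite addNye leeNy_eq.
- by apply: (gap 1%R) => // t; rewrite addNye leeNy_eq.
Qed.

Lemma eminus_lt0 (r s : \bar R) : r != +oo -> s != -oo ->
  (eminus r s < 0) = (r < s).
Proof.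
move=> rNy sNy; apply/idP/idP => [/ereal_inf_lt [_ [t rt <-]]|rs].
  rewrite lte_fin => t0; case: s sNy rt => [s _|_ _|//]; last by rewrite ltey.
  by move/le_lt_trans; apply; change ((s + t)%:E < s%:E); rewrite lte_fin; lra.
have lt0 (t : R) : (t < 0)%R -> r <= s + t%:E -> eminus r s < 0.
  move=> t0 rt; apply: (@le_lt_trans _ _ t%:E); last by rewrite lte_fin.
  by apply: ereal_inf_lbound; exists t.
case: r rNy rs lt0 => [r||] // _; case: s sNy => [s||] // _ rs lt0.
- apply: (lt0 (r - s)%R); first by rewrite lte_fin in rs; lra.
  by rewrite -EFinD lee_fin; lra.
- by apply: (lt0 (-1)%R) => //; rewrite leey.
- by apply: (lt0 (-1)%R) => //; exact: leNye.
- by apply: (lt0 (-1)%R) => //; exact: leNye.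
Qed.

End EMinus.

Section Phi.
Context {R : realType} {X : Type} {Z : tvsType R} {f : X -> set Z}.
Local Open Scope ereal_scope.

Lemma phi_le zs {x z} : f x z -> phi f zs x <= (- zs z)%:E.
Proof. by move=> fz; apply: ereal_inf_lbound; exists z. Qed.

Lemma phi_ge zs {x m} : (forall z, f x z -> m <= (- zs z)%:E) -> m <= phi f zs x.
Proof. by move=> fm; apply: le_ereal_inf_tmp => _ [z fz <-]; exact: fm. Qed.

Lemma phi_le_sub zs {x y} : f x `<=` f y -> phi f zs y <= phi f zs x.
Proof.
by move=> xy; apply: ereal_inf_le_tmp => _ [z fz <-]; exists z => //; exact: xy.
Qed.

Lemma phi_set0 zs {x} : f x = set0 -> phi f zs x = +oo.
Proof. by move=> fx0; rewrite /phi fx0 image_set0 ereal_inf0. Qed.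

End Phi.

Lemma set_minus0 (R : realType) (Z : tvsType R) (A B : set Z) :
  set_minus A B 0 <-> B `<=` A.
Proof.
split => [BA z Bz|BA _ [z Bz [_ -> <-]]]; last by rewrite addr0; exact: BA.
by apply: BA; exists z => //; exists 0 => //; rewrite addr0.
Qed.

Lemma phi_lt_not_sub (R : realType) (X : Type) (Z : tvsType R) (C : set Z)
    (f : X -> set Z) (x0 x : X) :
  closed_convex_cone C -> (exists zs, neg_dual_cone C zs /\ zs <> (fun _ => 0)) ->
  inG C (f x) -> ~ f x0 `<=` f x ->
  exists2 zs, neg_dual_cone C zs /\ zs <> (fun _ => 0) &
    (phi f zs x0 < phi f zs x)%E.
Proof.
move=> hC [zs0 Czs0] hfx Nsub.
have [z0 fz0 Nz0] : exists2 z, f x0 z & ~ f x z.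
  apply: contrapT => Nz0; apply: Nsub => z fz.
  by apply: contrapT => Nz; apply: Nz0; exists z.
have [fx0|/set0P fxN0] := eqVneq (f x) set0.
  exists zs0 => //; rewrite (phi_set0 _ fx0).
  by apply: le_lt_trans (phi_le zs0 fz0) _; rewrite ltey.
have [zs Czs [t t0 sep]] := inG_separation hC hfx fxN0 Nz0.
exists zs => //; apply: le_lt_trans (phi_le zs fz0) _.
apply: (@lt_le_trans _ _ (- zs z0 + t)%:E); first by rewrite lte_fin ltrDl.
by apply: phi_ge => z fz; rewrite lee_fin; exact: sep.
Qed.

Theorem mainTheorem19 (R : realType) (X : lmodType R) (Z : tvsType R)
  (hZ : hausdorff_space Z) (C : set Z) (hC : closed_convex_cone C)
  (hCm : exists zs : Z -> R, neg_dual_cone C zs /\ zs <> (fun _ => 0))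
  (f : X -> set Z) (hf : forall x, inG C (f x))
  (x0 : X) (hx0 : f x0 <> set0) :
  let Cm := fun zs : Z -> R => neg_dual_cone C zs /\ zs <> (fun _ => 0) in
  let a := forall x : X, f x0 `<=` f x -> f x = f x0 in
  let b := forall x : X, f x <> f x0 ->
             exists2 zs, Cm zs & (phi f zs x0 < phi f zs x)%E in
  let c := forall x : X, f x <> f x0 ->
             exists2 zs, Cm zs &
               (phi f zs x <> -oo)%E /\ (eminus (phi f zs x0) (phi f zs x) < 0)%E in
  let d := forall x : X, f x <> f x0 ->
             exists2 zs, Cm zs & (0 < eminus (phi f zs x) (phi f zs x0))%E in
  let e := forall x : X, f x <> f x0 -> ~ set_minus (f x) (f x0) 0 in
  [/\ a <-> b, a <-> c, a <-> d & a <-> e].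
Proof.
move=> Cm a b c d e.
have [y0 fy0] : f x0 !=set0 by apply/set0P/eqP.
have phix0_neqy zs : (phi f zs x0 != +oo)%E.
  by rewrite lt_eqF // (le_lt_trans (phi_le zs fy0)) ?ltey.
have ab : a -> b.
  move=> ha x nx; apply: phi_lt_not_sub => // sub; exact/nx/ha.
have ba : b -> a.
  move=> hb x sub; apply: contrapT => /hb [zs _]; apply/negP.
  by rewrite -leNgt; exact: phi_le_sub.
have bc : b <-> c.
  split=> [hb x /hb [zs Czs lt]|hc x /hc [zs Czs [/eqP phiNy lt0]]]; exists zs => //.
    have phiNy : (phi f zs x != -oo)%E.
      by apply: contraTneq lt => ->; rewrite ltNge leNye.
    by split; [exact/eqP|rewrite eminus_lt0 ?phix0_neqy].
  by rewrite -eminus_lt0 ?phix0_neqy.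
have bd : b <-> d.
  split=> [hb x /hb [zs Czs lt]|hd x /hd [zs Czs gt0]]; exists zs => //.
    by rewrite eminus_gt0.
  by rewrite -eminus_gt0.
have ae : a <-> e.
  split=> [ha x nx /set_minus0 sub|he x sub]; first exact/nx/ha.
  by apply: contrapT => /he; apply; exact/set_minus0.
split=> //.
- by split=> [/ab/bc|/bc/ba].
- by split=> [/ab/bd|/bd/ba].
Qed.
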